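(* Let $d_1,\dots,d_m$ be positive integers with $\sum_{j=1}^m d_j=n$ and let $B=\sum_{j=1}^m d_j\log_2(n/d_j)$. Fix $i$ and let $d_i'=d_i+1$, $d_j'=d_j$ for $j\ne i$, $n'=n+1$, and $B'=\sum_{j=1}^m d_j'\log_2(n'/d_j')$. Then there is an absolute constant $c>0$ (independent of $n,m,d_1,\dots,d_m,i$) such that $$(B'+n')-(B+n)\ \ge\ c\cdot\log(n/d_i).$$
   Context: $\log_2$ denotes the binary logarithm and $\log(x):=\max(\log_2 x,1)$. This models inserting one element into gap $\Delta_i$ of a partition of $n$ elements into gaps of sizes $d_j=|\Delta_j|$. *)

From Stdlib Require Import Reals Lra Lia Arith List.
Open Scope R_scope.

Definition sumR (m : nat) (f : nat -> R) : R :=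
  fold_right Rplus 0 (map f (seq 0 m)).

Definition sumN (m : nat) (f : nat -> nat) : nat :=
  fold_right Nat.add 0%nat (map f (seq 0 m)).

Definition log2 (x : R) : R := ln x / ln 2.

(* log(x) := max(log2 x, 1) *)
Definition logp (x : R) : R := Rmax (log2 x) 1.

Definition Bsum (m : nat) (d : nat -> nat) : R :=
  sumR m (fun j => INR (d j) * log2 (INR (sumN m d) / INR (d j))).

Definition incr_at (d : nat -> nat) (i : nat) : nat -> nat :=
  fun j => if Nat.eqb j i then S (d j) else d j.

From Stdlib Require Import Reals Lra Lia Arith List.
Open Scope R_scope.

(* Write F(x) = x ln x, N = n = sum_j d_j and D = d_i.  Since
   B ln 2 = N ln N - sum_j d_j ln d_j = F(N) - sum_j F(d_j), inserting one
   element into gap i changes (B + n) ln 2 by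
      [F(N+1) - F(N)] - [F(D+1) - F(D)] + ln 2.
   The elementary bound ln y <= y - 1 gives
      F(N+1) - F(N) >= ln(N+1) + 1/2   and   F(D+1) - F(D) <= ln(D+1) + 1,
   so the gain is at least ln((N+1)/(D+1)) + ln 2 - 1/2, which is both
   >= ln 2 - 1/2 and >= ln(N/D) - 1/2 because (N+1)/(D+1) >= N/(2D).
   Comparing with max(log2(N/D), 1) yields the constant c = (ln 2 - 1/2)/ln 2.
   The file first develops finite sums over lists (linearity, effect of
   incr_at), then the closed form of B, then the two one-step bounds for F,
   and finally combines them. *)

Definition lsum (l : list nat) (f : nat -> R) : R :=
  fold_right Rplus 0 (map f l).

Lemma lsum_ext (l : list nat) (f g : nat -> R) :
  (forall j, In j l -> f j = g j) -> lsum l f = lsum l g.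
Proof.
  induction l as [|a l IH]; intros Hfg; unfold lsum in *; simpl; auto.
  rewrite Hfg, IH by auto with datatypes. reflexivity.
Qed.

Lemma lsum_lincomb (l : list nat) (a b : R) (f g : nat -> R) :
  lsum l (fun j => a * f j + b * g j) = a * lsum l f + b * lsum l g.
Proof.
  induction l as [|x l IH]; unfold lsum in *; simpl; [ring|].
  rewrite IH. ring.
Qed.

Lemma INR_sumN_list (l : list nat) (d : nat -> nat) :
  INR (fold_right Nat.add 0%nat (map d l)) = lsum l (fun j => INR (d j)).
Proof.
  induction l as [|x l IH]; unfold lsum in *; simpl; auto.
  rewrite plus_INR, IH. reflexivity.
Qed.

Lemma lsum_incr_at (l : list nat) (d : nat -> nat) (i : nat) (G : nat -> R) :
  NoDup l -> In i l ->
  lsum l (fun j => G (incr_at d i j)) = lsum l (fun j => G (d j)) + G (S (d i)) - G (d i).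
Proof.
  induction l as [|a l IH]; intros Hnd Hin; [destruct Hin|].
  inversion Hnd as [|? ? Ha Hl]; subst. unfold lsum in *; simpl.
  unfold incr_at at 1. destruct (Nat.eqb_spec a i) as [->|Hai].
  - assert (Hrest : lsum l (fun j => G (incr_at d i j)) = lsum l (fun j => G (d j))).
    { apply lsum_ext. intros j Hj. unfold incr_at.
      destruct (Nat.eqb_spec j i); [subst; contradiction | reflexivity]. }
    unfold lsum in Hrest. rewrite Hrest. ring.
  - destruct Hin as [->|Hin]; [contradiction|].
    rewrite IH by assumption. ring.
Qed.

Lemma sumN_incr_at (m : nat) (d : nat -> nat) (i : nat) :
  (i < m)%nat -> sumN m (incr_at d i) = S (sumN m d).
Proof.
  intros Hi. apply INR_eq. unfold sumN.
  rewrite S_INR, !INR_sumN_list, (lsum_incr_at _ d i INR), S_INR by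
    (apply seq_NoDup || (apply in_seq; lia)).
  ring.
Qed.

Lemma le_sumN (m : nat) (d : nat -> nat) (i : nat) :
  (i < m)%nat -> (d i <= sumN m d)%nat.
Proof.
  unfold sumN. intros Hi. assert (Hin : In i (seq 0 m)) by (apply in_seq; lia).
  clear Hi. induction (seq 0 m) as [|a l IH]; simpl in *; [contradiction|].
  destruct Hin as [->|Hin]; [lia | specialize (IH Hin); lia].
Qed.

(* The function x ln x, whose increments govern the change of B. *)
Definition xlnx (x : R) : R := x * ln x.

Lemma Bsum_ln2 (m : nat) (d : nat -> nat) :
  (forall j, (j < m)%nat -> (0 < d j)%nat) -> (0 < sumN m d)%nat ->
  Bsum m d * ln 2 =
  xlnx (INR (sumN m d)) - lsum (seq 0 m) (fun j => xlnx (INR (d j))).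
Proof.
  intros Hd Hn. set (N := INR (sumN m d)).
  assert (HN : 0 < N) by (apply lt_0_INR; assumption).
  assert (Hl2 : ln 2 <> 0) by (pose proof ln_lt_2; lra).
  unfold Bsum, sumR.
  change (fold_right Rplus 0 (map ?f (seq 0 m))) with (lsum (seq 0 m) f).
  rewrite (lsum_ext _ _
    (fun j => (ln N / ln 2) * INR (d j) + (- / ln 2) * xlnx (INR (d j)))).
  2: { intros j Hj. apply in_seq in Hj. fold N.
       assert (Hdj : 0 < INR (d j)) by (apply lt_0_INR, Hd; lia).
       unfold log2, xlnx, Rdiv.
       rewrite ln_mult, ln_Rinv by (try apply Rinv_0_lt_compat; lra).
       field; assumption. }
  rewrite (lsum_lincomb _ _ _ (fun j => INR (d j)) (fun j => xlnx (INR (d j)))).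
  assert (HNsum : lsum (seq 0 m) (fun j => INR (d j)) = N)
    by (unfold N, sumN; symmetry; apply INR_sumN_list).
  rewrite HNsum. unfold xlnx. field. assumption.
Qed.

Lemma ln_le_mono (x y : R) : 0 < x -> x <= y -> ln x <= ln y.
Proof.
  intros Hx [Hlt|Heq]; [left; apply ln_increasing; lra | subst; lra].
Qed.

Lemma ln_le_sub1 (y : R) : 0 < y -> ln y <= y - 1.
Proof.
  intros Hy. pose proof (exp_ineq1_le (ln y)) as H. rewrite exp_ln in H; lra.
Qed.

Lemma ln_succ_bounds (x : R) : 0 < x -> / (x + 1) <= ln (x + 1) - ln x <= / x.
Proof.
  intros Hx. split.
  - pose proof (ln_le_sub1 (x / (x + 1)) ltac:(apply Rdiv_lt_0_compat; lra)) as H.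
    unfold Rdiv in H. rewrite ln_mult, ln_Rinv in H by (try apply Rinv_0_lt_compat; lra).
    replace (x * / (x + 1) - 1) with (- / (x + 1)) in H by (field; lra). lra.
  - pose proof (ln_le_sub1 ((x + 1) / x) ltac:(apply Rdiv_lt_0_compat; lra)) as H.
    unfold Rdiv in H. rewrite ln_mult, ln_Rinv in H by (try apply Rinv_0_lt_compat; lra).
    replace ((x + 1) * / x - 1) with (/ x) in H by (field; lra). lra.
Qed.

Lemma xlnx_step_lower (N : R) : 1 <= N -> xlnx (N + 1) - xlnx N >= ln (N + 1) + / 2.
Proof.
  intros HN. destruct (ln_succ_bounds N ltac:(lra)) as [Hlo _].
  assert (Hhalf : / 2 <= N * / (N + 1)).
  { apply (Rmult_le_reg_r (N + 1)); [lra|].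
    rewrite Rmult_assoc, Rinv_l by lra. lra. }
  assert (Hmul : N * / (N + 1) <= N * (ln (N + 1) - ln N))
    by (apply Rmult_le_compat_l; lra).
  unfold xlnx. lra.
Qed.

Lemma xlnx_step_upper (D : R) : 1 <= D -> xlnx (D + 1) - xlnx D <= ln (D + 1) + 1.
Proof.
  intros HD. destruct (ln_succ_bounds D ltac:(lra)) as [_ Hhi].
  assert (Hmul : D * (ln (D + 1) - ln D) <= D * / D) by (apply Rmult_le_compat_l; lra).
  rewrite Rinv_r in Hmul by lra.
  unfold xlnx. lra.
Qed.

Lemma insertion_gain (N D : R) : 1 <= D -> D <= N ->
  (xlnx (N + 1) - xlnx N) - (xlnx (D + 1) - xlnx D) + ln 2
  >= Rmax (ln N - ln D - ln 2) 0 + (ln 2 - / 2).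
Proof.
  intros HD HDN.
  pose proof (xlnx_step_lower N ltac:(lra)) as Hup.
  pose proof (xlnx_step_upper D HD) as Hdown.
  (* (N+1)/(D+1) >= 1 and (N+1)/(D+1) >= N/(2D) *)
  assert (Hge1 : ln (D + 1) <= ln (N + 1)) by (apply ln_le_mono; lra).
  assert (Hge_half : ln N + ln (D + 1) <= ln 2 + ln D + ln (N + 1)).
  { rewrite <- !ln_mult by lra. apply ln_le_mono; nra. }
  unfold Rmax. destruct Rle_dec; lra.
Qed.

(* With L = ln(N/D) and t = ln 2, the gain bound dominates c * max(L/t, 1) * t. *)
Lemma gain_dominates_logp (L t : R) : / 2 < t ->
  Rmax (L - t) 0 + (t - / 2) >= (t - / 2) / t * Rmax (L / t) 1 * t.
Proof.
  intros Ht.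
  replace ((t - / 2) / t * Rmax (L / t) 1 * t) with ((t - / 2) * Rmax (L / t) 1)
    by (field; lra).
  unfold Rmax. destruct (Rle_dec (L / t) 1) as [Hs|Hb]; destruct Rle_dec.
  - nra.
  - nra.
  - apply Rnot_le_lt in Hb.
    assert (Ht_lt_L : t < L).
    { apply (Rmult_lt_compat_r t) in Hb; [|lra].
      unfold Rdiv in Hb. rewrite Rmult_assoc, Rinv_l in Hb by lra. lra. }
    lra.
  - apply Rnot_le_lt in Hb.
    assert (HL : L = L / t * t) by (field; lra). nra.
Qed.

Theorem lemma5p1 :
  exists c : R, 0 < c /\
    forall (m : nat) (d : nat -> nat) (i : nat),
      (i < m)%nat ->
      (forall j, (j < m)%nat -> (0 < d j)%nat) ->
      (Bsum m (incr_at d i) + INR (sumN m (incr_at d i)))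
        - (Bsum m d + INR (sumN m d))
      >= c * logp (INR (sumN m d) / INR (d i)).
Proof.
  pose proof ln_lt_2 as Hl2.
  exists ((ln 2 - / 2) / ln 2). split; [apply Rdiv_lt_0_compat; lra|].
  intros m d i Hi Hd.
  assert (Hdi : (d i <= sumN m d)%nat) by (apply le_sumN; assumption).
  assert (Hd' : forall j, (j < m)%nat -> (0 < incr_at d i j)%nat).
  { intros j Hj. unfold incr_at. destruct (Nat.eqb j i); specialize (Hd j Hj); lia. }
  pose proof (Hd i Hi) as Hdi0.
  pose proof (Bsum_ln2 m d Hd ltac:(lia)) as Hold.
  pose proof (Bsum_ln2 m (incr_at d i) Hd' ltac:(rewrite sumN_incr_at; lia)) as Hnew.
  rewrite sumN_incr_at in * by assumption.
  rewrite (lsum_incr_at _ d i (fun x => xlnx (INR x))) in Hnew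
    by (apply seq_NoDup || (apply in_seq; lia)).
  rewrite !S_INR in *.
  set (N := INR (sumN m d)) in *. set (D := INR (d i)) in *.
  assert (HD : 1 <= D) by (apply (le_INR 1); lia).
  assert (HDN : D <= N) by (apply le_INR; lia).
  assert (HlnND : ln (N / D) = ln N - ln D).
  { unfold Rdiv. rewrite ln_mult, ln_Rinv by (try apply Rinv_0_lt_compat; lra). ring. }
  pose proof (insertion_gain N D HD HDN) as Hgain.
  pose proof (gain_dominates_logp (ln N - ln D) (ln 2) Hl2) as Hdom.
  unfold logp, log2. rewrite HlnND.
  apply Rle_ge, (Rmult_le_reg_r (ln 2)); [lra|].
  replace (((Bsum m (incr_at d i) + (N + 1)) - (Bsum m d + N)) * ln 2)
    with ((xlnx (N + 1) - xlnx N) - (xlnx (D + 1) - xlnx D) + ln 2)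
    by (rewrite !Rmult_minus_distr_r, !Rmult_plus_distr_r, Hold, Hnew; ring).
  lra.
Qed.
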